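(* Let $L$ be a finite-dimensional Lie algebra over an algebraically closed field $F$ of any characteristic. Then $L$ has a maximal subalgebra $M$ that is abelian if and only if either (i) $L$ has an abelian ideal of codimension one in $L$; or (ii) $L^{(1)}$ has dimension one and $\phi(L)=0$. In either case, $L$ is completely solvable.
   Context: $L^{(1)}=[L,L]$. $L$ is completely solvable if $L^{(1)}$ is nilpotent. $\phi(L)$ is the Frattini ideal: the largest ideal of $L$ contained in the intersection of all maximal subalgebras of $L$. *)

From HB Require Import structures.
From mathcomp Require Import all_boot all_order all_algebra all_field.
Set Implicit Arguments. Unset Strict Implicit. Unset Printing Implicit Defensive.
Import GRing.Theory.
Local Open Scope ring_scope.

(* A finite-dimensional Lie algebra over F: a vectType L (finite dimensional
   by construction) with a bracket br that is bilinear, alternating and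
   satisfies the Jacobi identity. *)
Definition lie_bracket (F : fieldType) (L : vectType F) (br : L -> L -> L) :=
  [/\ (forall (a : F) (x y z : L), br (a *: x + y) z = a *: br x z + br y z),
      (forall (a : F) (x y z : L), br z (a *: x + y) = a *: br z x + br z y),
      (forall x : L, br x x = 0) &
      (forall x y z : L, br x (br y z) + br y (br z x) + br z (br x y) = 0)].

Section Lie.
Variables (F : fieldType) (L : vectType F) (br : L -> L -> L).

(* [U, V] : the subspace spanned by all brackets [u, v], u in U, v in V
   (by bilinearity, spanned by the brackets of basis vectors). *)
Definition brspace (U V : {vspace L}) : {vspace L} :=
  <<[seq br u v | u <- vbasis U, v <- vbasis V]>>%VS.

Definition subalgebra (U : {vspace L}) :=
  forall x y, x \in U -> y \in U -> br x y \in U.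

Definition ideal (I : {vspace L}) :=
  forall x y, x \in I -> br y x \in I.

Definition abelian_sub (U : {vspace L}) :=
  forall x y, x \in U -> y \in U -> br x y = 0.

Definition maximal_subalgebra (M : {vspace L}) :=
  [/\ subalgebra M, M != fullv%VS &
      forall S, subalgebra S -> (M <= S)%VS -> S = M \/ S = fullv%VS].

Definition derived : {vspace L} := brspace fullv%VS fullv%VS.

Fixpoint lcs (K : {vspace L}) (n : nat) : {vspace L} :=
  if n is m.+1 then brspace K (lcs K m) else K.

Definition nilpotent_sub (K : {vspace L}) := exists n, lcs K n = 0%VS.

Definition completely_solvable := nilpotent_sub derived.

Definition frattini_ideal (Phi : {vspace L}) :=
  [/\ ideal Phi,
      (forall M, maximal_subalgebra M -> (Phi <= M)%VS) &
      (forall I, ideal I -> (forall M, maximal_subalgebra M -> (I <= M)%VS) ->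
         (I <= Phi)%VS)].

End Lie.

From HB Require Import structures.
From mathcomp Require Import all_boot all_order all_algebra all_field.
Set Implicit Arguments. Unset Strict Implicit. Unset Printing Implicit Defensive.
Import GRing.Theory.
Local Open Scope ring_scope.
From Stdlib Require Import Classical.
Import passmx.

(* For an abelian maximal subalgebra M the operators ad m (m in M) commute, so
   over an algebraically closed field they have a common eigenvector x modulo M;
   then M + Fx is a subalgebra, hence all of L, and M has codimension one.
   Either M is then an ideal, or some ad m0 moves x out of M; shifting x by an
   element of M makes it an eigenvector y of ad m0 with nonzero eigenvalue, the
   Jacobi identity forces [L, y] = Fy, and the centraliser of y is an abelian
   ideal of codimension one.  Conversely, an abelian subspace of codimension one
   is a maximal subalgebra, and if L^(1) is a line and phi(L) = 0 then some
   maximal subalgebra misses L^(1), so meets it trivially and is abelian.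
   Finally L^(1) is abelian in both cases: it lies in the codimension-one ideal,
   or it is one-dimensional. *)

Section Subspaces.
Variables (K : fieldType) (V : vectType K).

Lemma minimal_vspace (P : {vspace V} -> Prop) (W : {vspace V}) : P W ->
  exists W0, P W0 /\ forall W1, P W1 -> (W1 <= W0)%VS -> W1 = W0.
Proof.
have [n] := ubnP (\dim W); elim: n W => // n IH W; rewrite ltnS => leWn PW.
have [[W1 [PW1 sW1W neW1W]] | minW] :=
  classic (exists W1, [/\ P W1, (W1 <= W)%VS & W1 != W]).
  apply: IH PW1; apply: leq_trans leWn.
  by rewrite (ltn_leqif (dimv_leqif_eq sW1W)) neW1W.
exists W; split => // W1 PW1 sW1W; apply: NNPP => neW1W.
by apply: minW; exists W1; split => //; apply/eqP.
Qed.

Lemma dim_add_line (U : {vspace V}) x : x \notin U ->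
  \dim (U + <[x]>) = (\dim U).+1.
Proof.
move=> xU; have x0 : x != 0 by apply: contraNneq xU => ->; rewrite rpred0.
rewrite dimv_disjoint_sum ?dim_vline ?x0 ?addn1 //.
apply/eqP; rewrite -subv0; apply/subvP => y /memv_capP [yU /vlineP [k yE]].
have [k0 | nz_k] := eqVneq k 0; first by rewrite yE k0 scale0r memv0.
by move: xU; rewrite -(scalerK nz_k x) -yE rpredZ.
Qed.

Lemma memv_add_line (U : {vspace V}) x z : z \in (U + <[x]>)%VS ->
  exists u k, u \in U /\ z = u + k *: x.
Proof. by case/memv_addP => u uU [_ /vlineP [k ->] ->]; exists u, k. Qed.

Lemma codim1_add_line (U : {vspace V}) x :
  (\dim U).+1 = \dim {:V} -> x \notin U -> (U + <[x]>)%VS = fullv.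
Proof.
by move=> dimU xU; apply/eqP; rewrite eqEdim subvf dim_add_line // -dimU ltnSn.
Qed.

Lemma codim1P (U : {vspace V}) :
  (\dim U).+1 = \dim {:V} <-> exists2 x, x \notin U & (U + <[x]>)%VS = fullv.
Proof.
split=> [dimU | [x xU UxF]]; last by rewrite -UxF dim_add_line.
have /subvPn [x _ xU] : ~~ (fullv <= U)%VS.
  by apply: contraTN isT => /dimvS; rewrite -dimU ltnn.
by exists x; rewrite ?codim1_add_line.
Qed.

End Subspaces.

Section CommonEigenvector.
Variable F : closedFieldType.

Lemma leigenvalue_exists (V : vectType F) (f : 'End(V)) : (0 < \dim {:V})%N ->
  exists a, leigenvalue f a.
Proof.
move=> dimV_gt0; pose A := mxof (vbasis fullv) (vbasis fullv) f.
have /closed_rootP [a rAa] : size (char_poly A) != 1%N.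
  by rewrite size_char_poly; case: (\dim _) dimV_gt0.
exists a; rewrite /leigenvalue (leigenspaceE (vbasisP fullv)) vsof_eq0 //.
  by rewrite -eigenvalue_root_char in rAa.
exact: vbasisP.
Qed.

Lemma stable_eigenvector (V : vectType F) (f : 'End(V)) (W : {vspace V}) :
  W != 0%VS -> (forall w, w \in W -> f w \in W) ->
  exists a w, [/\ w \in W, w != 0 & f w = a *: w].
Proof.
move=> W0 fW; pose g : 'End(subvs_of W) := linfun (vsproj W \o f \o vsval).
have : (0 < \dim {:subvs_of W})%N.
  by rewrite dimvf; change (0 < \dim W)%N; rewrite lt0n dimv_eq0.
move=> /(leigenvalue_exists g) [a]; rewrite /leigenvalue -vpick0.
set u := vpick _ => u0; have := memv_pick (leigenspace g a); rewrite -/u.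
rewrite memv_ker !lfun_simp /= subr_eq0 => /eqP gu.
exists a, (vsval u); split; first exact: subvsP.
  by apply: contra u0 => /eqP u0; apply/eqP/val_inj; rewrite /= u0.
by rewrite -[f _](vsprojK (fW _ (subvsP u))) gu linearZ.
Qed.

Lemma common_eigenvector_mod (V : vectType F) (I : Type) (f : I -> 'End(V))
    (U : {vspace V}) :
    (forall i j v, f i (f j v) = f j (f i v)) -> U != fullv ->
  exists2 x, x \notin U & forall i, exists a, f i x - a *: x \in U.
Proof.
move=> fC UnF.
pose stable (W : {vspace V}) := forall i w, w \in W -> f i w \in W.
have [W [[stW WU] minW]] :
    exists W, (stable W /\ ~~ (W <= U)%VS) /\
      forall W1, stable W1 /\ ~~ (W1 <= U)%VS -> (W1 <= W)%VS -> W1 = W.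
  apply: (minimal_vspace (W := fullv)); split=> [i w _|]; first exact: memvf.
  by apply: contra UnF => FU; rewrite eqEsubv subvf.
have /subvPn [x xW xU] := WU.
exists x => // i.
have W0 : W != 0%VS by apply: contraNneq WU => ->; exact: sub0v.
have [a [v [vW v0 fv]]] := stable_eigenvector W0 (stW i).
exists a; pose g : 'End(V) := (f i - a *: \1)%VF.
have gE w : g w = f i w - a *: w by rewrite !lfun_simp.
have gWW : (g @: W <= W)%VS.
  by apply/subvP => _ /memv_imgP [w wW ->]; rewrite gE rpredB ?rpredZ ?stW.
have stgW : stable (g @: W)%VS.
  move=> j _ /memv_imgP [w wW ->].
  by rewrite gE linearB linearZ /= fC -gE memv_img ?stW.
(* (f i - a) @: W is a stable subspace of W with a nonzero kernel on W, hence
   proper, so by minimality it lies in U. *)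
suff gWU : (g @: W <= U)%VS by rewrite -gE (subvP gWU) ?memv_img.
apply: contraT => gWU; have eqW := minW _ (conj stgW gWU) gWW.
have := limg_ker_dim g W; rewrite eqW -[X in _ = X]add0n => /addIn /eqP.
rewrite dimv_eq0 => /eqP kerW0.
have : v \in (W :&: lker g)%VS by rewrite memv_cap vW memv_ker gE fv subrr eqxx.
by rewrite kerW0 memv0 (negPf v0).
Qed.

End CommonEigenvector.

Section LieAlgebra.
Variables (F : fieldType) (L : vectType F) (br : L -> L -> L).
Hypothesis hL : lie_bracket br.

Definition brl (z x : L) := br x z.
Definition brr (x z : L) := br x z.

Lemma brl_linear z : linear (brl z).
Proof. by case: hL => brlin _ _ _ a x y; exact: brlin. Qed.
Lemma brr_linear x : linear (brr x).
Proof. by case: hL => _ brlin _ _ a y z; exact: brlin. Qed.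
HB.instance Definition _ z :=
  GRing.isLinear.Build F L L *:%R (brl z) (brl_linear z).
HB.instance Definition _ x :=
  GRing.isLinear.Build F L L *:%R (brr x) (brr_linear x).

Lemma brDl x y z : br (x + y) z = br x z + br y z.
Proof. exact: (raddfD (brl z) x y). Qed.
Lemma brDr x y z : br z (x + y) = br z x + br z y.
Proof. exact: (raddfD (brr z) x y). Qed.
Lemma brZl a x z : br (a *: x) z = a *: br x z.
Proof. exact: (linearZ_LR (brl z) a x). Qed.
Lemma brZr a x z : br z (a *: x) = a *: br z x.
Proof. exact: (linearZ_LR (brr z) a x). Qed.
Lemma brNr x z : br z (- x) = - br z x. Proof. exact: (raddfN (brr z) x). Qed.
Lemma br0r z : br z 0 = 0. Proof. exact: (linear0 (brr z)). Qed.
Lemma brxx x : br x x = 0. Proof. by case: hL. Qed.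
Lemma jacobi x y z : br x (br y z) + br y (br z x) + br z (br x y) = 0.
Proof. by case: hL. Qed.

Lemma brC x y : br x y = - br y x.
Proof.
apply/eqP; rewrite -addr_eq0; apply/eqP.
by rewrite -(brxx (x + y)) brDl !brDr !brxx add0r addr0.
Qed.

Definition ad (x : L) : 'End(L) := linfun (brr x).
Lemma adE x y : ad x y = br x y. Proof. by rewrite lfunE. Qed.

Lemma mem_brspace (U V : {vspace L}) u v :
  u \in U -> v \in V -> br u v \in brspace br U V.
Proof.
move=> uU vV; rewrite -[br u v]/(brr u v) (coord_vbasis vV) linear_sum.
apply: memv_suml => j _; rewrite linearZ /=; apply: rpredZ.
rewrite -[brr u _]/(brl _ u) (coord_vbasis uU) linear_sum.
apply: memv_suml => i _; rewrite linearZ /=; apply/rpredZ/memv_span.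
by apply: (allpairs_f (fun u v => br u v)); exact: memt_nth.
Qed.

Lemma brspace_subv (U V W : {vspace L}) :
  (forall u v, u \in U -> v \in V -> br u v \in W) -> (brspace br U V <= W)%VS.
Proof.
move=> UVW; apply/span_subvP => _ /allpairsP [[u v] /= [uU vV ->]].
by apply: UVW; exact: vbasis_mem.
Qed.

Lemma derived_ideal : ideal br (derived br).
Proof. by move=> x y _; apply: mem_brspace; exact: memvf. Qed.

Lemma abelian_br_comm (M : {vspace L}) m1 m2 y : abelian_sub br M ->
  m1 \in M -> m2 \in M -> br m1 (br m2 y) = br m2 (br m1 y).
Proof.
move=> abM m1M m2M; have := jacobi m1 m2 y.
rewrite (abM _ _ m1M m2M) br0r addr0 (brC y m1) brNr.
by move/eqP; rewrite subr_eq0 => /eqP.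
Qed.

Lemma subalgebra_add_line (M : {vspace L}) x : subalgebra br M ->
    (forall m, m \in M -> br m x \in (M + <[x]>)%VS) ->
  subalgebra br (M + <[x]>)%VS.
Proof.
move=> sM Mx _ _ /memv_add_line [m1 [k1 [m1M ->]]]
  /memv_add_line [m2 [k2 [m2M ->]]].
rewrite brDl !brDr !brZl !brZr brxx !scaler0 addr0 (brC x m2).
by rewrite !rpredD ?rpredZ ?rpredN ?Mx // (subvP (addvSl _ _)) ?sM.
Qed.

Lemma abelian_codim1_maximal (I : {vspace L}) :
  abelian_sub br I -> (\dim I).+1 = \dim {:L} -> maximal_subalgebra br I.
Proof.
move=> abI dimI; split=> [x y xI yI | | S _ IS]; first by rewrite abI ?rpred0.
  by apply/eqP => IF; move: dimI; rewrite IF => /esym/n_Sn.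
have [leSI | ltIS] := leqP (\dim S) (\dim I).
  by left; apply/esym/eqP; rewrite eqEdim IS.
by right; apply/eqP; rewrite eqEdim subvf -dimI.
Qed.

Lemma derived_sub_codim1_ideal (I : {vspace L}) :
  ideal br I -> (\dim I).+1 = \dim {:L} -> (derived br <= I)%VS.
Proof.
move=> idI /codim1P [x xI IxF]; apply: brspace_subv => u v _ _.
have := memvf u; rewrite -IxF => /memv_add_line [i1 [a [i1I ->]]].
have := memvf v; rewrite -IxF => /memv_add_line [i2 [b [i2I ->]]].
rewrite brDl !brDr !brZl !brZr brxx !scaler0 addr0 (brC i1 x).
by rewrite !rpredD ?rpredZ ?rpredN ?idI.
Qed.

Lemma abelian_dim1 (U : {vspace L}) : \dim U = 1%N -> abelian_sub br U.
Proof.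
move=> dimU; have U0 : U != 0%VS by rewrite -dimv_eq0 dimU.
have -> : U = <[vpick U]>%VS.
  by apply/eqP; rewrite eq_sym eqEdim -memvE memv_pick dim_vline vpick0 U0 dimU.
by move=> _ _ /vlineP [a ->] /vlineP [b ->]; rewrite brZl brZr brxx !scaler0.
Qed.

Lemma abelian_derived_completely_solvable :
  abelian_sub br (derived br) -> completely_solvable br.
Proof.
move=> abD; exists 1%N; apply/eqP; rewrite -subv0.
by apply: brspace_subv => u v uD vD; rewrite abD ?rpred0.
Qed.

Lemma maximal_abelian_of_derived_dim1 : \dim (derived br) = 1%N ->
    frattini_ideal br 0%VS ->
  exists M, maximal_subalgebra br M /\ abelian_sub br M.
Proof.
move=> dimD [_ _ PhiMax].
have [[M [maxM DM]] | DinM] :=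
  classic (exists M, maximal_subalgebra br M /\ ~~ (derived br <= M)%VS).
  exists M; split => // x y xM yM; have [sM _ _] := maxM.
  have MD0 : (M :&: derived br = 0)%VS.
    apply/eqP; rewrite -dimv_eq0 -leqn0 -ltnS -dimD ltnNge; apply: contra DM.
    rewrite (geq_leqif (dimv_leqif_sup (capvSr _ _))) => /subv_trans; apply.
    exact: capvSl.
  by apply/eqP; rewrite -memv0 -MD0 memv_cap sM ?mem_brspace ?memvf.
have : (derived br <= 0)%VS.
  apply: PhiMax derived_ideal _ => M maxM; apply: contraT => DM.
  by case: DinM; exists M.
by rewrite subv0 => /eqP D0; move: dimD; rewrite D0 dimv0.
Qed.

Definition codim1_abelian_ideal (I : {vspace L}) :=
  [/\ ideal br I, abelian_sub br I & (\dim I).+1 = \dim {:L}].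

Lemma centralizer_codim1_abelian_ideal (M : {vspace L}) y m0 a :
    abelian_sub br M -> (\dim M).+1 = \dim {:L} -> y \notin M ->
    m0 \in M -> a != 0 -> br m0 y = a *: y ->
  codim1_abelian_ideal (lker (ad y)).
Proof.
move=> abM dimM yM m0M a0 m0y.
have dec z : exists m k, m \in M /\ z = m + k *: y.
  by apply: memv_add_line; rewrite codim1_add_line ?memvf.
have My m : m \in M -> br m y \in <[y]>%VS.
  move=> mM; have [m' [c [m'M mE]]] := dec (br m y).
  suff -> : br m y = c *: y by rewrite rpredZ ?memv_line.
  apply: (scalerI a0); rewrite -brZr -m0y (abelian_br_comm y abM mM m0M).
  by rewrite mE brDr brZr (abM _ _ m0M m'M) add0r m0y !scalerA mulrC.
have Ly z : br z y \in <[y]>%VS.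
  by have [m [k [mM ->]]] := dec z; rewrite brDl brZl brxx !scaler0 addr0 My.
have kerE z : (z \in lker (ad y)) = (br y z == 0) by rewrite memv_ker adE.
split.
- move=> z w; rewrite !kerE => /eqP yz; have /vlineP [k wy] := Ly w.
  have := jacobi y w z; rewrite (brC z y) yz oppr0 br0r addr0 (brC y w) wy.
  by rewrite brNr brZr (brC z y) yz oppr0 scaler0 oppr0 addr0 => ->.
- move=> z w; rewrite !kerE => /eqP yz /eqP yw.
  have [m1 [k1 [m1M zE]]] := dec z; have [m2 [k2 [m2M wE]]] := dec w.
  move: yw; rewrite wE brDr brZr brxx !scaler0 addr0 => ym2.
  rewrite brDr brZr (brC z y) yz oppr0 scaler0 addr0 zE brDl brZl.
  by rewrite (abM _ _ m1M m2M) add0r ym2 scaler0.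
- have y0 : y != 0 by apply: contraNneq yM => ->; exact: rpred0.
  have imE : (ad y @: fullv)%VS = <[y]>%VS.
    apply/subv_anti/andP; split.
      by apply/subvP => _ /memv_imgP [z _ ->]; rewrite adE brC rpredN.
    rewrite -memvE; apply/memv_imgP; exists (- a^-1 *: m0); first exact: memvf.
    by rewrite adE brZr brC m0y scaleNr scalerN opprK scalerA mulVf ?scale1r.
  have := limg_ker_dim (ad y) fullv; rewrite capfv imE dim_vline y0 => <-.
  by rewrite addn1.
Qed.

Lemma codim1_abelian_ideal_of_subalgebra (M : {vspace L}) :
    abelian_sub br M -> (\dim M).+1 = \dim {:L} ->
  exists I, codim1_abelian_ideal I.
Proof.
move=> abM dimM; have [x xM MxF] := (codim1P M).1 dimM.
have dec z : exists m k, m \in M /\ z = m + k *: x.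
  by apply: memv_add_line; rewrite MxF memvf.
have [[m0 m0M m0xM] | Mx] := classic (exists2 m0, m0 \in M & br m0 x \notin M).
  have [mu [a [muM m0xE]]] := dec (br m0 x).
  have a0 : a != 0 by apply: contraNneq m0xM => a0; rewrite m0xE a0 scale0r addr0.
  pose y := x + a^-1 *: mu.
  have yM : y \notin M.
    by apply: contra xM => yM; rewrite -(addrK (a^-1 *: mu) x) rpredB ?rpredZ.
  have m0y : br m0 y = a *: y.
    rewrite brDr brZr (abM _ _ m0M muM) scaler0 addr0 m0xE scalerDr scalerA.
    by rewrite mulfV // scale1r addrC.
  exists (lker (ad y)).
  exact: centralizer_codim1_abelian_ideal abM dimM yM m0M a0 m0y.
exists M; split => // i z iM; have [m [k [mM ->]]] := dec z.
rewrite brDl brZl (abM _ _ mM iM) add0r (brC x i) rpredZ // rpredN.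
by apply: contraT => ixM; case: Mx; exists i.
Qed.

End LieAlgebra.

Section ClosedField.
Variables (F : closedFieldType) (L : vectType F) (br : L -> L -> L).
Hypothesis hL : lie_bracket br.

Lemma maximal_abelian_codim1 (M : {vspace L}) :
  maximal_subalgebra br M -> abelian_sub br M -> (\dim M).+1 = \dim {:L}.
Proof.
case=> sM MnF Mmax abM.
have adC (m1 m2 : subvs_of M) v :
    ad br (vsval m1) (ad br (vsval m2) v) = ad br (vsval m2) (ad br (vsval m1) v).
  by rewrite !(adE hL) (abelian_br_comm hL v abM) ?subvsP.
have [x xM xMx] := common_eigenvector_mod adC MnF.
apply/codim1P; exists x => //.
have sMx : subalgebra br (M + <[x]>)%VS.
  apply: subalgebra_add_line => // m mM; have [a] := xMx (Sub m mM).
  rewrite (adE hL) SubK => mxM; rewrite -(subrK (a *: x) (br m x)).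
  by rewrite memv_add ?memvZ ?memv_line.
have [SM | //] := Mmax _ sMx (addvSl _ _).
by move: xM; rewrite -SM (subvP (addvSr _ _)) ?memv_line.
Qed.

End ClosedField.

Theorem proposition3p2 (F : closedFieldType) (L : vectType F)
  (br : L -> L -> L) (hL : lie_bracket br) :
  ((exists M : {vspace L}, maximal_subalgebra br M /\ abelian_sub br M) <->
   ((exists I : {vspace L}, [/\ ideal br I, abelian_sub br I &
                                (\dim I).+1 = \dim (fullv : {vspace L})%VS]) \/
    (\dim (derived br) = 1%N /\ frattini_ideal br 0%VS))) /\
  (((exists I : {vspace L}, [/\ ideal br I, abelian_sub br I &
                                (\dim I).+1 = \dim (fullv : {vspace L})%VS]) \/
    (\dim (derived br) = 1%N /\ frattini_ideal br 0%VS)) ->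
   completely_solvable br).
Proof.
split.
  split=> [[M [maxM abM]] | [[I [_ abI dimI]] | [dimD Phi0]]].
  - left; apply: (codim1_abelian_ideal_of_subalgebra hL abM).
    exact: (maximal_abelian_codim1 hL maxM abM).
  - by exists I; split=> //; apply: abelian_codim1_maximal.
  - exact: maximal_abelian_of_derived_dim1.
case=> [[I [idI abI dimI]] | [dimD _]];
  apply: abelian_derived_completely_solvable.
  have DI := derived_sub_codim1_ideal hL idI dimI.
  by move=> u v uD vD; apply: abI; rewrite (subvP DI).
exact: abelian_dim1.
Qed.
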